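(* Let $d\in\mathbb{N}$. For every $r\in\mathcal{R}$, $$\mathrm{WA}(r)=\pi(\Pi_r)\qquad\text{and hence}\qquad \mathrm{Bad}(r)=\mathbb{R}^d\setminus\pi(\Pi_r).$$
   Context: For $t\in\mathbb{R}$, $\|t\|$ is the distance from $t$ to $\mathbb{Z}$. Write $\mathbb{N}=\{1,2,\dots\}$. $\mathcal{R}=\{r\in\mathbb{R}^d: r_i\ge0,\ \sum_i r_i=1\}$. For $r\in\mathcal{R}$ and $x=(x_i)\in\mathbb{R}^d$, set $$\|x\|_r=\Big(\max_{1\le i\le d}\|x_i\|^{1/r_i}\Big)^{1/d}.$$ $\mathrm{Bad}(r)=\{x\in\mathbb{R}^d:\inf_{n\in\mathbb{N}}n\|nx\|_r^d>0\}$ and $\mathrm{WA}(r)=\mathbb{R}^d\setminus\mathrm{Bad}(r)$. $\mathcal{D}$ is the set of all non-increasing $\psi:\mathbb{N}\to\mathbb{R}_{\ge0}$ with $\sum_n\psi(n)^d=\infty$. For $\psi:\mathbb{N}\to\mathbb{R}_{\ge0}$, $W(r,\psi)$ is the set of $(x,y)\in\mathbb{R}^d\times\mathbb{R}^d$ such that $\|nx+y\|_r<\psi(n)$ for infinitely many $n\in\mathbb{N}$. Then $\Pi_r=\bigcap_{\psi\in\mathcal{D}}W(r,\psi)$. $\pi(x,y)=x$ is the projection onto the first factor. *)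

From HB Require Import structures.
From mathcomp Require Import all_boot all_order all_algebra.
From mathcomp Require Import all_classical all_reals all_analysis.
Set Implicit Arguments. Unset Strict Implicit. Unset Printing Implicit Defensive.
Import Order.TTheory GRing.Theory Num.Theory.
Local Open Scope classical_set_scope.
Local Open Scope ring_scope.

Section Defs.
Variables (R : realType) (d : nat).

Definition distZ (t : R) : R :=
  let f := t - (Num.floor t)%:~R in Num.min f (1 - f).

Definition weights : set ('I_d -> R) :=
  [set r | (forall i, 0 <= r i) /\ \sum_(i < d) r i = 1].

(* ||x_i||^{1/r_i}, with the convention ||x_i||^{1/0} = 0 (note ||x_i|| <= 1/2 < 1) *)
Definition wterm (r : 'I_d -> R) (x : 'I_d -> R) (i : 'I_d) : R :=
  if r i == 0 then 0 else powR (distZ (x i)) (r i)^-1.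

Definition rnorm (r : 'I_d -> R) (x : 'I_d -> R) : R :=
  powR (\big[Num.max/0]_(i < d) wterm r x i) (d%:R)^-1.

Definition scalev (n : nat) (x : 'I_d -> R) : 'I_d -> R := fun i => n%:R * x i.

Definition Bad (r : 'I_d -> R) : set ('I_d -> R) :=
  [set x | 0 < inf [set (n%:R * (rnorm r (scalev n x)) ^+ d) | n in [set n : nat | (0 < n)%N]]].

Definition WA (r : 'I_d -> R) : set ('I_d -> R) := ~` Bad r.

Definition Dclass : set (nat -> R) :=
  [set psi | (forall n, (0 < n)%N -> 0 <= psi n) /\
             (forall m n, (0 < m)%N -> (m <= n)%N -> psi n <= psi m) /\
             (\sum_(1 <= n <oo) ((psi n) ^+ d)%:E = +oo)%E].

Definition W (r : 'I_d -> R) (psi : nat -> R) : set (('I_d -> R) * ('I_d -> R)) :=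
  [set xy | infinite_set [set n : nat | (0 < n)%N /\
     rnorm r (fun i => n%:R * xy.1 i + xy.2 i) < psi n]].

Definition Pi (r : 'I_d -> R) : set (('I_d -> R) * ('I_d -> R)) :=
  [set xy | forall psi, Dclass psi -> W r psi xy].

End Defs.

From HB Require Import structures.
From mathcomp Require Import all_boot all_order all_algebra.
From mathcomp Require Import all_classical all_reals all_analysis.
From mathcomp Require Import ring lra zify.
Import Order.TTheory GRing.Theory Num.Theory.
Local Open Scope classical_set_scope.
Local Open Scope ring_scope.

(* Write M z = ||z||_r^d = max_i ||z_i||^(1/r_i); it satisfies M (a - b) <= K max (M a) (M b).
   If x is badly approximable, n M (n x) >= c, so two points z_n = n x + y of an orbit satisfy
   max (M z_m) (M z_n) >= a / |m - n| with a = c / K.  This yields blocks (N_k, N_(k+1)] with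
   N_(k+1) >= 2 N_k on which M z_n >= a / N_(k+1), and the staircase psi^d = a / N_(k+1) is a
   non-increasing function with divergent sum such that (x, y) is not in W(r, psi).
   Conversely, if x is not badly approximable, pick q_k with q_k M (q_k x) < eps_k, where eps_k
   decays geometrically and so fast that the errors q_k x - round (q_k x) sum up to some Y.
   With y = -Y and n_K = q_0 + ... + q_(K-1) this gives q_K M (n_K x + y) <= K eps_K, so psi^d
   would be summable if psi^d <= M (n x + y) held eventually. *)

Section DistZ.
Context {R : realType}.
Implicit Types (s t : R) (k : int).

Definition nearest_int t : int :=
  let f := t - (Num.floor t)%:~R in
  if f < 1 - f then Num.floor t else Num.floor t + 1.

Lemma distZE t : distZ t = `|t - (nearest_int t)%:~R|.
Proof.
rewrite /distZ /nearest_int /Num.min.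
have := floor_le t; have := floorD1_gt t; rewrite intrD => h2 h1.
case: ifP => _; first by rewrite ger0_norm // subr_ge0.
by rewrite intrD ler0_norm; lra.
Qed.

Lemma distZ_le_dist t k : distZ t <= `|t - k%:~R|.
Proof.
rewrite /distZ ge_min.
have := floor_le t; have := floorD1_gt t; rewrite intrD => h2 h1.
have [kle|klt] := lerP k (Num.floor t).
  have : k%:~R <= (Num.floor t)%:~R :> R by rewrite ler_int.
  by move=> hk; rewrite ger0_norm; lra.
have : (Num.floor t + 1)%:~R <= k%:~R :> R by rewrite ler_int lezD1.
by rewrite intrD => hk; rewrite ler0_norm; lra.
Qed.

Lemma distZ_ge0 t : 0 <= distZ t.
Proof. by rewrite distZE. Qed.

Lemma distZ_le_norm t : distZ t <= `|t|.
Proof. by have := distZ_le_dist t 0; rewrite subr0. Qed.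

Lemma distZD_le s t : distZ (s + t) <= distZ s + distZ t.
Proof.
rewrite (distZE s) (distZE t).
apply: le_trans (distZ_le_dist _ (nearest_int s + nearest_int t)) _.
by rewrite intrD opprD addrACA; exact: ler_normD.
Qed.

Lemma distZN t : distZ (- t) = distZ t.
Proof.
have le t' : distZ (- t') <= distZ t'.
  rewrite (distZE t'); apply: le_trans (distZ_le_dist _ (- nearest_int t')) _.
  by rewrite intrN -opprD normrN.
by apply/eqP; rewrite eq_le le /= -{1}[t]opprK le.
Qed.

Lemma distZDz t k : distZ (t + k%:~R) = distZ t.
Proof.
have le t' k' : distZ (t' + k'%:~R) <= distZ t'.
  rewrite (distZE t'); apply: le_trans (distZ_le_dist _ (nearest_int t' + k')) _.
  by rewrite intrD opprD addrACA subrr addr0.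
apply/eqP; rewrite eq_le le /=.
by have := le (t + k%:~R) (- k); rewrite intrN addrK.
Qed.

End DistZ.

Lemma finite_nat_bound (A : set nat) : finite_set A ->
  exists N, forall n, A n -> (n <= N)%N.
Proof.
move=> fA; exists (\max_(k <- finmap.enum_fset (fset_set A)) k)%N => n An.
apply: (@leq_bigmax_seq _ _ _ (fun k => k)) => //.
by rewrite in_fset_set // inE.
Qed.

Lemma nested_balls_meet {R : realType} (s b : nat -> R) :
  (forall K, 0 <= b K) ->
  (forall K, `|s K.+1 - s K| + b K.+1 <= b K) ->
  exists Y, forall K, `|Y - s K| <= b K.
Proof.
move=> b0 shrink.
have lo_mono : {homo (fun K => s K - b K) : k l / (k <= l)%N >-> k <= l}.
  apply: homo_leq => [//|u v w|K /=]; first exact: le_trans.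
  have := shrink K; have := ler_norm (s K - s K.+1); rewrite -normrN opprB; lra.
have up_mono : {homo (fun K => s K + b K) : k l / (k <= l)%N >-> l <= k}.
  apply: homo_leq => [//|u v w h1 h2|K /=]; first exact: le_trans h2 h1.
  have := shrink K; have := ler_norm (s K.+1 - s K); lra.
have lo_le_up K L : s K - b K <= s L + b L.
  have [KL|LK] := leqP K L.
    by apply: le_trans (lo_mono _ _ KL) _; have := b0 L; lra.
  by apply: le_trans (up_mono _ _ (ltnW LK)); have := b0 K; lra.
set S := [set s K + b K | K in [set: nat]].
have hS : has_lbound S by exists (s 0%N - b 0%N) => _ [L _ <-]; exact: lo_le_up.
have nS : S !=set0 by exists (s 0%N + b 0%N), 0%N.
exists (inf S) => K.
have h1 : inf S <= s K + b K by apply: ge_inf => //; exists K.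
have h2 : s K - b K <= inf S by apply: lb_le_inf => // _ [L _ <-]; exact: lo_le_up.
by rewrite ler_norml; apply/andP; split; lra.
Qed.

Lemma powRK {R : realType} (a e : R) : 0 <= a -> e != 0 -> powR (powR a e) e^-1 = a.
Proof. by move=> a0 e0; rewrite -powRrM mulfV // powRr1. Qed.

Lemma powRVn_exprn {R : realType} (a : R) n : (0 < n)%N -> 0 <= a ->
  powR a (n%:R)^-1 ^+ n = a.
Proof.
move=> n0 a0; rewrite -powR_mulrn ?powR_ge0 // -powRrM mulVf ?powRr1 //.
by rewrite pnatr_eq0 -lt0n.
Qed.

Definition orbit {R : realType} {d : nat} (x y : 'I_d -> R) (n : nat) : 'I_d -> R :=
  fun i => n%:R * x i + y i.

Section QuasiNorm.
Context {R : realType} {d : nat} (r : 'I_d -> R).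
Hypothesis d_gt0 : (0 < d)%N.
Hypothesis r_ge0 : forall i, 0 <= r i.

Definition rmax (z : 'I_d -> R) : R := \big[Num.max/0]_(i < d) wterm r z i.

Lemma wterm_ge0 z i : 0 <= wterm r z i.
Proof. by rewrite /wterm; case: ifP => _ //; exact: powR_ge0. Qed.

Lemma wterm_le_rmax z i : wterm r z i <= rmax z.
Proof. exact: le_bigmax. Qed.

Lemma rmax_ge0 z : 0 <= rmax z.
Proof. exact: le_trans (wterm_ge0 z (Ordinal d_gt0)) (wterm_le_rmax _ _). Qed.

Lemma rnorm_exprd z : rnorm r z ^+ d = rmax z.
Proof. exact/powRVn_exprn/rmax_ge0. Qed.

Lemma rnorm_ltE z p : 0 <= p -> (rnorm r z < p) = (rmax z < p ^+ d).
Proof. by move=> p0; rewrite -rnorm_exprd ltr_pXn2r // nnegrE powR_ge0. Qed.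

Definition quasi_const : R := 1 + \sum_(i < d) powR 2 (r i)^-1.

Lemma quasi_const_gt0 : 0 < quasi_const.
Proof.
apply: (lt_le_trans ltr01); rewrite lerDl.
by apply: sumr_ge0 => i _; exact: powR_ge0.
Qed.

Lemma powR2_le_quasi_const i : powR 2 (r i)^-1 <= quasi_const.
Proof.
rewrite /quasi_const (bigD1 i) //= addrCA lerDl addr_ge0 //.
by apply: sumr_ge0 => j _; exact: powR_ge0.
Qed.

Lemma rmaxB_le a b :
  rmax (fun i => a i - b i) <= quasi_const * Num.max (rmax a) (rmax b).
Proof.
have K0 : 0 <= quasi_const * Num.max (rmax a) (rmax b).
  by rewrite mulr_ge0 ?(ltW quasi_const_gt0) // le_max rmax_ge0.
apply: bigmax_le => // i _; rewrite /wterm; case: ifP => // ri0.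
set e := (r i)^-1; have e0 : 0 <= e by rewrite invr_ge0.
set m := Num.max (distZ (a i)) (distZ (b i)).
have m0 : 0 <= m by rewrite le_max distZ_ge0.
have hab : distZ (a i - b i) <= 2 * m.
  apply: le_trans (distZD_le _ _) _; rewrite distZN.
  have : distZ (a i) <= m by rewrite le_max lexx.
  have : distZ (b i) <= m by rewrite le_max lexx orbT.
  lra.
apply: le_trans (ge0_ler_powR e0 _ _ hab) _; rewrite ?nnegrE ?distZ_ge0 ?mulr_ge0 //.
rewrite powRM //; apply: ler_pM; rewrite ?powR_ge0 ?powR2_le_quasi_const //.
have wle c : powR (distZ (c i)) e <= rmax c by have := wterm_le_rmax c i; rewrite /wterm ri0.
by rewrite /m; case: (leP (distZ (a i)) (distZ (b i))) => _; rewrite le_max wle ?orbT.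
Qed.

Lemma notW_eventually_le psi x y : (forall n, (0 < n)%N -> 0 <= psi n) ->
  ~ W r psi (x, y) <->
  exists B, forall n, (B < n)%N -> psi n ^+ d <= rmax (orbit x y n).
Proof.
move=> psi0; split.
  move=> /contrapT /finite_nat_bound [B hB]; exists B => n Bn.
  have n0 : (0 < n)%N by apply: leq_ltn_trans Bn.
  rewrite leNgt; apply/negP => hlt.
  have /hB : (0 < n)%N /\ rnorm r (orbit x y n) < psi n by rewrite rnorm_ltE ?psi0.
  by rewrite leqNgt Bn.
move=> [B hB] hW; apply: hW.
apply: (@sub_finite_set _ _ `I_B.+1); last exact: finite_II.
move=> n /= [n0 hlt]; rewrite /mkset ltnS leqNgt; apply/negP => Bn.
by move: hlt; rewrite rnorm_ltE ?psi0 // ltNge (hB _ Bn).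
Qed.

End QuasiNorm.

Section Staircase.
Context {R : realType} {N : nat -> nat}.
Hypothesis N0_gt0 : (0 < N 0)%N.
Hypothesis N_double : forall k, (2 * N k <= N k.+1)%N.

Lemma N_gt0 k : (0 < N k)%N.
Proof. by elim: k => // k ih; have := N_double k; lia. Qed.

Lemma leq_N k : (k <= N k)%N.
Proof. by elim: k => // k ih; have := N_double k; have := N_gt0 k; lia. Qed.

Lemma N_homo : {homo N : k l / (k <= l)%N}.
Proof.
by apply: homo_leq => // [u v w|k]; [exact: leq_trans | have := N_double k; lia].
Qed.

Definition stair_index n := ex_minn (ex_intro (fun k => n <= N k)%N n (leq_N n)).

Lemma stair_indexP n : (n <= N (stair_index n))%N.
Proof. by rewrite /stair_index; case: ex_minnP. Qed.

Lemma stair_index_min n k : (n <= N k)%N -> (stair_index n <= k)%N.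
Proof. by rewrite /stair_index; case: ex_minnP => m _ h /h. Qed.

Lemma stair_index_block k n : (N k < n <= N k.+1)%N -> stair_index n = k.+1.
Proof.
move=> /andP[kn nk]; apply/eqP; rewrite eqn_leq stair_index_min //=.
rewrite ltnNge; apply/negP => /N_homo; have := stair_indexP n; lia.
Qed.

Lemma stair_block_exists n : (N 0 < n)%N -> exists k, (N k < n <= N k.+1)%N.
Proof.
move=> n0; exists (stair_index n).-1.
have : stair_index n != 0%N.
  by apply: contraTneq n0 => h; have := stair_indexP n; rewrite h -leqNgt.
case: (stair_index n) (stair_indexP n) (@stair_index_min n) => // k nk kmin _ /=.
by rewrite nk andbT ltnNge; apply/negP => /kmin; rewrite ltnn.
Qed.

Variable a : R.
Hypothesis a_gt0 : 0 < a.

Definition staircase n : R := a / (N (stair_index n))%:R.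

Lemma staircase_ge0 n : 0 <= staircase n.
Proof. by rewrite divr_ge0 // ltW. Qed.

Lemma staircase_nonincr m n : (m <= n)%N -> staircase n <= staircase m.
Proof.
move=> mn; rewrite ler_wpM2l ?(ltW a_gt0) // lef_pV2 ?posrE ?ltr0n ?N_gt0 //.
by rewrite ler_nat N_homo // stair_index_min // (leq_trans mn (stair_indexP n)).
Qed.

Lemma staircase_block k n : (N k < n <= N k.+1)%N -> staircase n = a / (N k.+1)%:R.
Proof. by move=> /stair_index_block; rewrite /staircase => ->. Qed.

Lemma staircase_block_sum k : a / 2 <= \sum_((N k).+1 <= n < (N k.+1).+1) staircase n.
Proof.
rewrite (@eq_big_nat _ _ _ _ _ _ (fun=> a / (N k.+1)%:R)); last exact: staircase_block.
rewrite sumr_const_nat subSS -[_ *+ (_ - _)]mulr_natr natrB; last by have := N_double k; lia.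
have : (2 * N k)%:R <= (N k.+1)%:R :> R by rewrite ler_nat.
have : (0 : R) < (N k.+1)%:R by rewrite ltr0n N_gt0.
rewrite natrM; set u := (N k)%:R; set v := (N k.+1)%:R => v0 uv.
have uv2 : u / v <= 1 / 2 by rewrite ler_pdivrMr //; lra.
have -> : a / v * (v - u) = a - a * (u / v) by field; rewrite gt_eqF.
have := ler_wpM2l (ltW a_gt0) uv2; lra.
Qed.

Lemma staircase_partial_sum K : K%:R * (a / 2) <= \sum_(1 <= n < (N K).+1) staircase n.
Proof.
elim: K => [|K ih]; first by rewrite mul0r sumr_ge0 // => n _; exact: staircase_ge0.
rewrite (@big_cat_nat _ _ _ (N K).+1) //= ?ltnS ?N_homo //.
by rewrite -natr1 mulrDl mul1r lerD // staircase_block_sum.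
Qed.

Lemma staircase_series : (\sum_(1 <= n <oo) (staircase n)%:E = +oo)%E.
Proof.
apply: eq_infty => M.
have [K hK] : exists K : nat, M * 2 / a < K%:R.
  by exists (Num.truncn (M * 2 / a)).+1; exact: truncnS_gt.
apply: le_trans (nneseries_lim_ge (N K).+1 _); last first.
  by move=> n _ _; rewrite lee_fin staircase_ge0.
rewrite sumEFin lee_fin; apply: le_trans (staircase_partial_sum K).
by move: hK; rewrite ltr_pdivrMr //; lra.
Qed.

End Staircase.

Section BadOrbit.
Context {R : realType} {d : nat} {r : 'I_d -> R}.
Hypothesis d_gt0 : (0 < d)%N.
Hypothesis r_ge0 : forall i, 0 <= r i.
Context {x y : 'I_d -> R} {c : R}.
Hypothesis c_gt0 : 0 < c.
Hypothesis x_bad : forall n, (0 < n)%N -> c <= n%:R * rmax r (scalev n x).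

Let a := c / quasi_const r.
Let M n := rmax r (orbit x y n).

Let a_gt0 : 0 < a.
Proof. by rewrite divr_gt0 // quasi_const_gt0. Qed.

Lemma orbit_separated m n : (0 < m)%N -> (0 < n)%N -> m != n ->
  a <= `|m - n|%N%:R * Num.max (M m) (M n).
Proof.
move=> m0 n0 neq; wlog mn : m n m0 n0 {neq} / (m < n)%N => [hw|].
  case: (ltngtP m n) neq => // [mn|nm] _; first exact: hw.
  by rewrite distnC maxC; exact: hw.
have orbitB : scalev (n - m) x = fun i => orbit x y n i - orbit x y m i.
  by apply: funext => i; rewrite /scalev /orbit natrB ?(ltnW mn) //; ring.
rewrite distnEr ?(ltnW mn) // maxC /a ler_pdivrMr ?quasi_const_gt0 //.
rewrite -mulrA [_ * quasi_const r]mulrC.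
apply: le_trans (x_bad (n - m) _) _; first by rewrite subn_gt0.
by rewrite orbitB; apply: ler_wpM2l; [exact: ler0n | exact: rmaxB_le].
Qed.

Lemma orbit_rmax_gt0 : exists N0, (0 < N0)%N /\ forall n, (N0 < n)%N -> 0 < M n.
Proof.
have zero_uniq m n : (0 < m)%N -> (0 < n)%N -> M m = 0 -> M n = 0 -> m = n.
  move=> m0 n0 Mm Mn; apply/eqP/negPn/negP => /(orbit_separated _ _ m0 n0).
  by rewrite Mm Mn maxxx mulr0 leNgt a_gt0.
have Mpos n : M n != 0 -> 0 < M n by rewrite lt_neqAle eq_sym => ->; exact: rmax_ge0.
case: (pselect (exists n, (0 < n)%N /\ M n = 0)) => [[n0 [n0_gt0 Mn0]]|no_zero].
  exists n0; split => // n n0n; apply/Mpos/eqP => Mn.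
  by have := zero_uniq _ _ n0_gt0 (ltn_trans n0_gt0 n0n) Mn0 Mn => /eqP; rewrite ltn_eqF.
exists 1%N; split => // n n1; apply/Mpos/eqP => Mn.
by apply: no_zero; exists n; split => //; apply: ltn_trans n1.
Qed.

(* If some e in (N, 2N] has M e = v < a / 2N, separation from e keeps M above a / N'
   on (N, N'] for N' = floor (a / v) + 1. *)
Lemma orbit_block N : (0 < N)%N -> (forall n, (N < n)%N -> 0 < M n) ->
  exists N', (2 * N <= N')%N /\ forall n, (N < n <= N')%N -> a / N'%:R <= M n.
Proof.
move=> N_gt0 M_gt0.
have N2 : (0 : R) < (2 * N)%:R by rewrite ltr0n; lia.
case: (pselect (forall n, (N < n <= 2 * N)%N -> a / (2 * N)%:R <= M n)) => [h|].
  by exists (2 * N)%N.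
move=> /existsNP [e /not_implyP [/andP[Ne e2N] /negP]]; rewrite -ltNge => Me.
set v := M e in Me; have v_gt0 : 0 < v := M_gt0 e Ne.
pose N' := (Num.truncn (a / v)).+1.
have av_lt : a / v < N'%:R := truncnS_gt _.
have av_ge : N'%:R - 1 <= a / v by rewrite -natr1 addrK truncn_le ltW // divr_gt0.
have : (2 * N)%:R < a / v by rewrite ltr_pdivlMr // mulrC -ltr_pdivlMr.
move=> /lt_trans /(_ av_lt); rewrite ltr_nat => /ltnW N'_ge.
exists N'; split => // n /andP[Nn nN']; rewrite leNgt; apply/negP => Mn.
have aN'_lt : a / N'%:R < v by rewrite ltr_pdivrMr ?ltr0n // mulrC -ltr_pdivrMr.
have ne : n != e by apply: contraTneq Mn => ->; rewrite -leNgt ltW.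
have := orbit_separated _ _ (leq_ltn_trans (leq0n N) Nn) (leq_ltn_trans (leq0n N) Ne) ne.
rewrite (max_idPr (ltW (lt_trans Mn aN'_lt))) => sep.
have : (`|n - e|%N%:R : R) <= N'%:R - 2 by rewrite lerBrDr -natrD ler_nat; lia.
have : (N'%:R - 1) * v <= a by rewrite -ler_pdivlMr.
nra.
Qed.

Lemma orbit_blocks : exists N : nat -> nat, [/\ (0 < N 0)%N,
  forall k, (2 * N k <= N k.+1)%N &
  forall k n, (N k < n <= N k.+1)%N -> a / (N k.+1)%:R <= M n].
Proof.
have [N0 [N0_gt0 M_gt0]] := orbit_rmax_gt0.
have /choice [next next_block] : forall N, exists N', (0 < N)%N ->
    (forall n, (N < n)%N -> 0 < M n) ->
    (2 * N <= N')%N /\ forall n, (N < n <= N')%N -> a / N'%:R <= M n.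
  move=> N; case: (pselect ((0 < N)%N /\ forall n, (N < n)%N -> 0 < M n)).
    by move=> [N_gt0 /(orbit_block _ N_gt0) [N' ?]]; exists N'.
  by move=> nhyp; exists 0%N => N_gt0 hpos; case: nhyp.
pose Ns k := iter k next N0.
have inv k : (0 < Ns k)%N /\ forall n, (Ns k < n)%N -> 0 < M n.
  elim: k => [|k [Nk_gt0 Mk_gt0]] //.
  have [Nk2 _] := next_block _ Nk_gt0 Mk_gt0.
  have NS : Ns k.+1 = next (Ns k) by [].
  split => [|n kn]; first by rewrite NS; lia.
  by apply: Mk_gt0; move: kn; rewrite NS; lia.
exists Ns; split => [|k|k]; first exact: (inv 0%N).1.
  exact: (next_block _ (inv k).1 (inv k).2).1.
exact: (next_block _ (inv k).1 (inv k).2).2.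
Qed.

Lemma bad_orbit_notW : exists psi, Dclass d psi /\ ~ W r psi (x, y).
Proof.
have [N [N0_gt0 N_double N_block]] := orbit_blocks.
pose phi := staircase N0_gt0 N_double a.
pose psi n := powR (phi n) (d%:R)^-1.
have psi_exprd n : psi n ^+ d = phi n by rewrite powRVn_exprn ?staircase_ge0.
exists psi; split; last first.
  apply/(notW_eventually_le r d_gt0) => [n _|]; first exact: powR_ge0.
  exists (N 0%N) => n /(stair_block_exists N0_gt0 N_double) [k kn].
  by rewrite psi_exprd /phi (staircase_block _ _ _ _ _ kn); exact: N_block.
split; first by move=> n _; exact: powR_ge0.
split.
  move=> m n _ mn; apply: ge0_ler_powR; rewrite ?nnegrE ?invr_ge0 ?staircase_ge0 //.
  exact: staircase_nonincr.
rewrite (eq_eseriesr (g := fun n => (phi n)%:E)) => [|n _]; last by rewrite psi_exprd.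
exact: staircase_series.
Qed.

End BadOrbit.

Lemma nneseries_le_subseq {R : realType} (f : nat -> R) (s : nat -> nat) (C : R) :
  (forall n, (0 < n)%N -> 0 <= f n) -> (forall k, (k <= s k)%N) ->
  (forall k, \sum_(1 <= n < s k) f n <= C) ->
  (\sum_(1 <= n <oo) (f n)%:E <= C%:E)%E.
Proof.
move=> f0 s_ge hC; apply: lime_le.
  by apply: is_cvg_nneseries => n n1 _; rewrite lee_fin f0.
apply: nearW => m; rewrite sumEFin lee_fin; apply: le_trans (hC m).
by apply: (nondecreasing_series (P := predT)) => // n n1 _; exact: f0.
Qed.

Section WAOrbit.
Context {R : realType} {d : nat} {r : 'I_d -> R}.
Hypothesis d_gt0 : (0 < d)%N.
Hypothesis r_ge0 : forall i, 0 <= r i.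
Context {x : 'I_d -> R} {lam : R} {Q : R -> nat}.
Hypothesis lam_gt0 : 0 < lam.
Hypothesis lam_contract : forall i, r i != 0 -> powR lam (r i) <= 2^-1.
Hypothesis Q_approx : forall e, 0 < e ->
  (0 < Q e)%N /\ (Q e)%:R * rmax r (scalev (Q e) x) < e.

(* The factor [lam] makes the error bounds [tau k ^ r i] halve at each step, and
   [2^-k] makes the block sums [quasi_const r * eps k] summable. *)
Fixpoint eps k : R :=
  if k is k'.+1 then Num.min (lam * (eps k' / (Q (eps k'))%:R)) (2^-1 ^+ k) else 1.

Definition den k := Q (eps k).

Definition tau k := eps k / (den k)%:R.

Lemma eps_gt0 k : 0 < eps k.
Proof.
elim: k => [|k ih] /=; first exact: ltr01.
rewrite lt_min exprn_gt0 ?invr_gt0 // andbT mulr_gt0 // divr_gt0 // ltr0n.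
by case: (Q_approx _ ih).
Qed.

Lemma den_gt0 k : (0 < den k)%N.
Proof. by case: (Q_approx _ (eps_gt0 k)). Qed.

Let denR_gt0 k : (0 : R) < (den k)%:R.
Proof. by rewrite ltr0n den_gt0. Qed.

Lemma tau_gt0 k : 0 < tau k.
Proof. by rewrite divr_gt0 // eps_gt0. Qed.

Lemma den_tau k : (den k)%:R * tau k = eps k.
Proof. by rewrite mulrC divfK // gt_eqF. Qed.

Lemma rmax_den_lt k : rmax r (scalev (den k) x) < tau k.
Proof.
have [_ h] := Q_approx _ (eps_gt0 k).
by rewrite ltr_pdivlMr // mulrC.
Qed.

Lemma eps_le k : eps k <= 2^-1 ^+ k.
Proof. by case: k => [|k] /=; rewrite ?expr0 // ge_min lexx orbT. Qed.

Lemma tau_next k : tau k.+1 <= lam * tau k.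
Proof.
apply: le_trans (_ : eps k.+1 <= _); last by rewrite /= ge_min lexx.
by rewrite ler_pdivrMr // ler_peMr ?(ltW (eps_gt0 _)) // ler1n den_gt0.
Qed.

(* Coordinates with [r i = 0] are unconstrained ([wterm] vanishes there), so their
   errors are set to 0. *)
Definition err_bound k i : R := if r i == 0 then 0 else powR (tau k) (r i).

Definition err k i : R := if r i == 0 then 0
  else (den k)%:R * x i - (nearest_int ((den k)%:R * x i))%:~R.

Lemma err_bound_ge0 k i : 0 <= err_bound k i.
Proof. by rewrite /err_bound; case: ifP => _ //; exact: powR_ge0. Qed.

Lemma norm_err_le k i : `|err k i| <= err_bound k i.
Proof.
rewrite /err /err_bound; case: ifP => ri0; first by rewrite normr0.
have := le_lt_trans (wterm_le_rmax r _ i) (rmax_den_lt k).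
rewrite /wterm ri0 /scalev -distZE => lt_tau.
have := ge0_ler_powR (r_ge0 i) _ _ (ltW lt_tau).
rewrite -powRrM mulVf ?ri0 // powRr1 ?distZ_ge0 //.
by apply; rewrite nnegrE ?powR_ge0 ?(ltW (tau_gt0 _)).
Qed.

Lemma err_bound_next k i : err_bound k.+1 i <= err_bound k i / 2.
Proof.
rewrite /err_bound; case: ifP => ri0; first by rewrite mul0r.
apply: le_trans (ge0_ler_powR (r_ge0 i) _ _ (tau_next k)) _.
- by rewrite nnegrE (ltW (tau_gt0 _)).
- by rewrite nnegrE mulr_ge0 ?(ltW lam_gt0) ?(ltW (tau_gt0 _)).
rewrite powRM ?(ltW lam_gt0) ?(ltW (tau_gt0 _)) // mulrC.
by rewrite ler_wpM2l ?powR_ge0 // lam_contract ?ri0.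
Qed.

Definition err_sum K i := \sum_(0 <= k < K) err k i.

Lemma err_sum_limit :
  exists Y : 'I_d -> R, forall K i, `|Y i - err_sum K i| <= 2 * err_bound K i.
Proof.
have /choice [Y hY] : forall i, exists Yi : R,
    forall K, `|Yi - err_sum K i| <= 2 * err_bound K i.
  move=> i; apply: nested_balls_meet => [K|K].
    by rewrite mulr_ge0 // err_bound_ge0.
  rewrite /err_sum big_nat_recr //= addrAC subrr add0r.
  by have := norm_err_le K i; have := err_bound_next K i; lra.
by exists Y.
Qed.

Context {Y : 'I_d -> R}.
Hypothesis Y_limit : forall K i, `|Y i - err_sum K i| <= 2 * err_bound K i.

Let y i := - Y i.

Definition den_sum K := (\sum_(0 <= k < K) den k)%N.

Lemma den_sumS K : den_sum K.+1 = (den_sum K + den K)%N.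
Proof. by rewrite /den_sum big_nat_recr. Qed.

Lemma leq_den_sum K : (K <= den_sum K)%N.
Proof. by elim: K => // K ih; rewrite den_sumS; have := den_gt0 K; lia. Qed.

Lemma den_sum_mulr K i : r i != 0 -> (den_sum K)%:R * x i =
  err_sum K i + (\sum_(0 <= k < K) nearest_int ((den k)%:R * x i))%:~R.
Proof.
move=> ri0; elim: K => [|K ih].
  by rewrite /err_sum /den_sum !big_geq // mul0r add0r.
rewrite den_sumS /err_sum !big_nat_recr //= natrD mulrDl ih /err_sum intrD /err.
by rewrite (negbTE ri0); ring.
Qed.

Lemma rmax_orbit_den_sum K : rmax r (orbit x y (den_sum K)) <= quasi_const r * tau K.
Proof.
have K0 : 0 <= quasi_const r * tau K by rewrite mulr_ge0 // ltW ?quasi_const_gt0 ?tau_gt0.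
apply: bigmax_le => // i _; rewrite /wterm; case: ifP => // ri0.
have hdz : distZ (orbit x y (den_sum K) i) <= 2 * powR (tau K) (r i).
  rewrite /orbit /y den_sum_mulr ?ri0 // addrAC distZDz.
  apply: le_trans (distZ_le_norm _) _.
  by rewrite distrC; have := Y_limit K i; rewrite /err_bound ri0.
apply: le_trans (ge0_ler_powR _ _ _ hdz) _.
- by rewrite invr_ge0.
- by rewrite nnegrE distZ_ge0.
- by rewrite nnegrE mulr_ge0 ?powR_ge0.
rewrite powRM ?powR_ge0 // powRK ?(ltW (tau_gt0 _)) ?ri0 // ler_wpM2r ?(ltW (tau_gt0 _)) //.
exact: powR2_le_quasi_const.
Qed.

Lemma den_block_sum_le (phi : nat -> R) k :
  (forall m n, (0 < m)%N -> (m <= n)%N -> phi n <= phi m) -> (0 < den_sum k)%N ->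
  phi (den_sum k) <= rmax r (orbit x y (den_sum k)) ->
  \sum_((den_sum k).+1 <= n < (den_sum k.+1).+1) phi n <= quasi_const r * eps k.
Proof.
move=> phi_nonincr k_gt0 phi_le.
apply: (@le_trans _ _ (\sum_((den_sum k).+1 <= n < (den_sum k.+1).+1) phi (den_sum k))).
  by apply: ler_sum_nat => n /andP[kn _]; apply: phi_nonincr => //; exact: ltnW.
rewrite sumr_const_nat den_sumS subSS addKn -[_ *+ den k]mulr_natr mulrC -den_tau mulrCA.
by rewrite ler_wpM2l ?ler0n // (le_trans phi_le) // rmax_orbit_den_sum.
Qed.

Lemma WA_orbit_W psi : Dclass d psi -> W r psi (x, y).
Proof.
move=> [psi_ge0 [psi_nonincr psi_div]]; apply: contrapT.
move=> /(notW_eventually_le r d_gt0 _ _ _ psi_ge0) [B hB].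
pose phi n := psi n ^+ d.
have phi_ge0 n : (0 < n)%N -> 0 <= phi n by move=> n0; rewrite exprn_ge0 ?psi_ge0.
have phi_nonincr m n : (0 < m)%N -> (m <= n)%N -> phi n <= phi m.
  move=> m0 mn; rewrite /phi ler_pXn2r ?nnegrE ?psi_ge0 ?psi_nonincr //.
  exact: leq_trans mn.
pose K := quasi_const r; pose A := \sum_(1 <= n < (den_sum B.+1).+1) phi n.
have block j : \sum_((den_sum (B.+1 + j)).+1 <= n < (den_sum (B.+1 + j).+1).+1) phi n
    <= K * 2^-1 ^+ j.
  have Bj : (B < den_sum (B.+1 + j))%N by have := leq_den_sum (B.+1 + j); lia.
  apply: le_trans (den_block_sum_le _ _ phi_nonincr _ (hB _ Bj)) _; first lia.
  apply: ler_wpM2l; first exact: ltW (quasi_const_gt0 _).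
  apply: le_trans (eps_le _) _.
  by rewrite exprD ler_piMl ?exprn_ge0 ?exprn_ile1 ?invr_ge0 ?invf_le1 ?ler1n.
have part j : \sum_(1 <= n < (den_sum (B.+1 + j)).+1) phi n <= A + 2 * K * (1 - 2^-1 ^+ j).
  elim: j => [|j ih]; first by rewrite addn0 expr0 subrr mulr0 addr0.
  rewrite addnS (@big_cat_nat _ _ _ (den_sum (B.+1 + j)).+1) //; last first.
    by rewrite ltnS den_sumS leq_addr.
  by apply: le_trans (lerD ih (block j)) _; rewrite exprS; lra.
have : (\sum_(1 <= n <oo) (phi n)%:E <= (A + 2 * K)%:E)%E.
  apply: (nneseries_le_subseq _ (fun j => (den_sum (B.+1 + j)).+1)) => // [j|j].
    by have := leq_den_sum (B.+1 + j); lia.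
  apply: le_trans (part j) _; rewrite lerD2l; apply: ler_piMr.
    by rewrite mulr_ge0 // ltW // quasi_const_gt0.
  by rewrite gerBl exprn_ge0 // invr_ge0.
by rewrite psi_div.
Qed.

End WAOrbit.

Section Characterization.
Context {R : realType} {d : nat} {r : 'I_d -> R}.
Hypothesis d_gt0 : (0 < d)%N.
Hypothesis r_ge0 : forall i, 0 <= r i.

Lemma Bad_rmax_lb x : Bad r x ->
  exists2 c, 0 < c & forall n, (0 < n)%N -> c <= n%:R * rmax r (scalev n x).
Proof.
move=> x_bad; exists (inf [set n%:R * rnorm r (scalev n x) ^+ d | n in [set n | (0 < n)%N]]) => //.
move=> n n0; rewrite -(rnorm_exprd r d_gt0); apply: ge_inf; last by exists n.
by exists 0 => _ [m _ <-]; rewrite mulr_ge0 // exprn_ge0 // powR_ge0.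
Qed.

Lemma WA_rmax_small x : WA r x -> forall e, 0 < e ->
  exists q, (0 < q)%N /\ q%:R * rmax r (scalev q x) < e.
Proof.
move=> x_WA e e0; apply: contrapT => no_q; apply: x_WA; rewrite /Bad /=.
apply: lt_le_trans e0 _; apply: lb_le_inf; first by eexists; exists 1%N.
move=> _ [n n0 <-]; rewrite (rnorm_exprd r d_gt0) leNgt; apply/negP => lt_e.
by apply: no_q; exists n.
Qed.

Lemma contraction_exists :
  exists2 lam : R, 0 < lam & forall i, r i != 0 -> powR lam (r i) <= 2^-1.
Proof.
pose S := \sum_(i < d) (r i)^-1.
exists (powR 2^-1 S); first by rewrite powR_gt0 // invr_gt0.
move=> i ri0; rewrite -powRrM.
have S_ge : 1 <= S * r i.
  rewrite -(mulVf ri0) ler_wpM2r // /S (bigD1 i) //= lerDl.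
  by apply: sumr_ge0 => j _; rewrite invr_ge0.
by apply: le_trans (ger_powR _ S_ge) _; rewrite ?powRr1 //; apply/andP; split; lra.
Qed.

Lemma WA_sub_Pi x : WA r x -> exists y, Pi r (x, y).
Proof.
move=> x_WA.
have /choice [Q Q_approx] : forall e : R, exists q, 0 < e ->
    (0 < q)%N /\ q%:R * rmax r (scalev q x) < e.
  move=> e; case: (pselect (0 < e)) => [e_gt0|e_le0]; last by exists 0%N.
  by have [q ?] := WA_rmax_small _ x_WA _ e_gt0; exists q.
have [lam lam_gt0 lam_contract] := contraction_exists.
have [Y Y_limit] := err_sum_limit r_ge0 lam_gt0 lam_contract Q_approx.
by exists (fun i => - Y i) => psi; exact (WA_orbit_W d_gt0 r_ge0 lam_gt0 Q_approx Y_limit psi).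
Qed.

Lemma Pi_sub_WA x y : Pi r (x, y) -> WA r x.
Proof.
move=> xy_Pi /Bad_rmax_lb [c c_gt0 x_bad].
have [psi [psi_D psi_notW]] := bad_orbit_notW (y := y) d_gt0 r_ge0 c_gt0 x_bad.
exact: psi_notW (xy_Pi psi psi_D).
Qed.

End Characterization.

Theorem theorem14 (R : realType) (d : nat) (hd : (0 < d)%N) (r : 'I_d -> R) :
  weights r ->
  WA r = fst @` Pi r /\ Bad r = ~` (fst @` Pi r).
Proof.
move=> [r_ge0 _].
have WA_Pi : WA r = fst @` Pi r.
  apply/seteqP; split => [x /(WA_sub_Pi hd r_ge0) [y xy_Pi]|_ [[x y] xy_Pi <-]].
    by exists (x, y).
  exact: Pi_sub_WA hd r_ge0 _ _ xy_Pi.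
by split => //; rewrite -WA_Pi /WA setCK.
Qed.
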